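(* For every formula with placeholders $\varphi$ and all formulas $\psi_1,\psi_2$: $\mathbf{GF}\,\varphi[\psi_1\mathbf{W}\psi_2] \equiv \mathbf{GF}\,\varphi[\psi_1\mathbf{U}\psi_2] \vee (\mathbf{FG}\psi_1 \wedge \mathbf{GF}\,\varphi[\mathbf{true}])$ and $\mathbf{FG}\,\varphi[\psi_1\mathbf{U}\psi_2] \equiv (\mathbf{GF}\psi_2 \wedge \mathbf{FG}\,\varphi[\psi_1\mathbf{W}\psi_2]) \vee \mathbf{FG}\,\varphi[\mathbf{false}]$.
   Context: Fix a finite set $Ap$ of atomic propositions. A word is an infinite sequence $w = w[0]w[1]\dots$ of letters of $2^{Ap}$, and $w_i$ denotes the suffix $w[i]w[i+1]\dots$. Formulas are generated by $\varphi ::= \mathbf{true} \mid \mathbf{false} \mid a \mid \neg a \mid \varphi\wedge\varphi \mid \varphi\vee\varphi \mid \mathbf{X}\varphi \mid \varphi\,\mathbf{U}\,\varphi \mid \varphi\,\mathbf{W}\,\varphi \mid \mathbf{GF}\varphi \mid \mathbf{FG}\varphi$ ($a\in Ap$), where $\mathbf{GF}$, $\mathbf{FG}$ are single unary operators. Semantics: $w\models a$ iff $a\in w[0]$, $w\models\neg a$ iff $a\notin w[0]$, Boolean constants and connectives as usual; $w\models\mathbf{X}\varphi$ iff $w_1\models\varphi$; $w\models\varphi\mathbf{U}\psi$ iff $\exists k$: $w_k\models\psi$ and $\forall j<k$: $w_j\models\varphi$; $w\models\varphi\mathbf{W}\psi$ iff ($\forall k$: $w_k\models\varphi$) or $w\models\varphi\mathbf{U}\psi$;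 $w\models\mathbf{GF}\varphi$ iff $w_k\models\varphi$ for infinitely many $k$; $w\models\mathbf{FG}\varphi$ iff $\exists n\,\forall k\geq n$: $w_k\models\varphi$. $\varphi\equiv\psi$ means both formulas are satisfied by exactly the same words. A formula with placeholders is a formula over $Ap\cup\{\star\}$, where $\star$ is a special fresh atomic proposition, with at least one occurrence of $\star$ and no occurrence of $\neg\star$; for such $\varphi$ and a formula $\psi$, $\varphi[\psi]$ denotes the result of substituting $\psi$ for every occurrence of $\star$; substitution binds more strongly than any operator, so $\mathbf{GF}\,\varphi[\psi]$ means $\mathbf{GF}(\varphi[\psi])$. *)

From mathcomp Require Import all_boot.
Set Implicit Arguments. Unset Strict Implicit. Unset Printing Implicit Defensive.

Inductive formula (A : Type) : Type :=
| FTrue | FFalse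
| FAtom of A
| FNAtom of A
| FAnd of formula A & formula A
| FOr of formula A & formula A
| FX of formula A
| FU of formula A & formula A
| FW of formula A & formula A
| FGF of formula A
| FFG of formula A.
Arguments FTrue {A}. Arguments FFalse {A}.

Definition word (A : finType) := nat -> {set A}.
Definition suffix (A : finType) (w : word A) (i : nat) : word A := fun k => w (i + k).

Fixpoint sat (A : finType) (w : word A) (f : formula A) : Prop :=
  match f with
  | FTrue => True
  | FFalse => False
  | FAtom a => a \in w 0
  | FNAtom a => a \notin w 0
  | FAnd f g => sat w f /\ sat w g
  | FOr f g => sat w f \/ sat w g
  | FX f => sat (suffix w 1) f
  | FU f g => exists k, sat (suffix w k) g /\ forall j, j < k -> sat (suffix w j) f
  | FW f g => (forall k, sat (suffix w k) f) \/
              (exists k, sat (suffix w k) g /\ forall j, j < k -> sat (suffix w j) f)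
  | FGF f => forall n, exists k, n <= k /\ sat (suffix w k) f
  | FFG f => exists n, forall k, n <= k -> sat (suffix w k) f
  end.

Definition ltl_equiv (A : finType) (f g : formula A) : Prop :=
  forall w : word A, sat w f <-> sat w g.

(* Formulas with placeholders: formulas over Ap ∪ {⋆}, encoded as option A,
   with ⋆ = None. *)
Fixpoint has_star (A : Type) (f : formula (option A)) : bool :=
  match f with
  | FTrue | FFalse => false
  | FAtom None => true
  | FAtom (Some _) => false
  | FNAtom _ => false
  | FAnd f g | FOr f g | FU f g | FW f g => has_star f || has_star g
  | FX f | FGF f | FFG f => has_star f
  end.

Fixpoint no_neg_star (A : Type) (f : formula (option A)) : bool :=
  match f with
  | FTrue | FFalse | FAtom _ => true
  | FNAtom None => false
  | FNAtom (Some _) => true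
  | FAnd f g | FOr f g | FU f g | FW f g => no_neg_star f && no_neg_star g
  | FX f | FGF f | FFG f => no_neg_star f
  end.

Definition placeholder_formula (A : Type) (f : formula (option A)) : Prop :=
  has_star f /\ no_neg_star f.

Fixpoint subst (A : Type) (f : formula (option A)) (psi : formula A) : formula A :=
  match f with
  | FTrue => FTrue
  | FFalse => FFalse
  | FAtom None => psi
  | FAtom (Some a) => FAtom a
  | FNAtom None => FFalse (* unreachable for placeholder formulas *)
  | FNAtom (Some a) => FNAtom a
  | FAnd f g => FAnd (subst f psi) (subst g psi)
  | FOr f g => FOr (subst f psi) (subst g psi)
  | FX f => FX (subst f psi)
  | FU f g => FU (subst f psi) (subst g psi)
  | FW f g => FW (subst f psi) (subst g psi)
  | FGF f => FGF (subst f psi)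
  | FFG f => FFG (subst f psi)
  end.

(* Read [φ] at each position with ⋆ standing for a set S of positions, namely those where the
   substituted formula holds. Since ⋆ occurs only positively, the truth of [φ] at position i is
   monotone in S and depends only on S from i on, and [GF]/[FG] only look at positions from some
   point on. So it suffices to compare the position sets of [ψ1 W ψ2], [ψ1 U ψ2], true and false
   from some point on: U implies W always; W implies U unless ψ1 eventually holds forever, in which
   case W is eventually true; and W implies U when ψ2 holds infinitely often, while otherwise U is
   eventually false. *)

From Stdlib Require Import Setoid Classical FunctionalExtensionality.
From mathcomp Require Import all_boot zify.

Definition infinitely_often (P : nat -> Prop) : Prop := forall n, exists k, n <= k /\ P k.

Definition eventually_always (P : nat -> Prop) : Prop := exists n, forall k, n <= k -> P k.

Lemma eq_infinitely_often (P Q : nat -> Prop) :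
  (forall k, P k <-> Q k) -> infinitely_often P <-> infinitely_often Q.
Proof. by move=> PQ; split=> inf n; have [k [nk /PQ]] := inf n; exists k. Qed.

Lemma eq_eventually_always (P Q : nat -> Prop) :
  (forall k, P k <-> Q k) -> eventually_always P <-> eventually_always Q.
Proof. by move=> PQ; split=> -[n ev]; exists n => k /ev /PQ. Qed.

Lemma always_eventually_always (P : nat -> Prop) : (forall k, P k) -> eventually_always P.
Proof. by exists 0. Qed.

Lemma infinitely_often_impl (P Q : nat -> Prop) :
  eventually_always (fun k => P k -> Q k) -> infinitely_often P -> infinitely_often Q.
Proof.
move=> [n PQ] inf m; have [k [mnk Pk]] := inf (maxn m n).
by exists k; split; [lia | apply: PQ => //; lia].
Qed.

Lemma eventually_always_impl (P Q : nat -> Prop) :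
  eventually_always (fun k => P k -> Q k) -> eventually_always P -> eventually_always Q.
Proof. by move=> [n PQ] [m ev]; exists (maxn m n) => k mnk; apply: PQ; [|apply: ev]; lia. Qed.

Lemma not_infinitely_often (P : nat -> Prop) :
  ~ infinitely_often P -> eventually_always (fun k => ~ P k).
Proof.
move=> /not_all_ex_not [n not_after_n]; exists n => k nk Pk.
by apply: not_after_n; exists k.
Qed.

Section PlaceholderSemantics.

Variable A : finType.
Implicit Types (w : word A) (S T : nat -> Prop) (f : formula (option A)) (p q psi : formula A).

Definition holds w p (k : nat) : Prop := sat (suffix w k) p.

(* ⋆ holds exactly at the positions in [S]; the negated placeholder is read as false, matching
   the junk case of [subst]. *)
Fixpoint sat_at w S f (i : nat) : Prop :=
  match f with
  | FTrue => True
  | FFalse => False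
  | FAtom None => S i
  | FAtom (Some a) => a \in w i
  | FNAtom None => False
  | FNAtom (Some a) => a \notin w i
  | FAnd f g => sat_at w S f i /\ sat_at w S g i
  | FOr f g => sat_at w S f i \/ sat_at w S g i
  | FX f => sat_at w S f (i + 1)
  | FU f g => exists k, sat_at w S g (i + k) /\ forall j, j < k -> sat_at w S f (i + j)
  | FW f g => (forall k, sat_at w S f (i + k)) \/
              (exists k, sat_at w S g (i + k) /\ forall j, j < k -> sat_at w S f (i + j))
  | FGF f => forall n, exists k, n <= k /\ sat_at w S f (i + k)
  | FFG f => exists n, forall k, n <= k -> sat_at w S f (i + k)
  end.

Lemma suffixD w i k : suffix (suffix w i) k = suffix w (i + k).
Proof. by apply: functional_extensionality => n; rewrite /suffix addnA. Qed.

Lemma holds_subst w f psi i : holds w (subst f psi) i <-> sat_at w (holds w psi) f i.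
Proof.
rewrite /holds.
elim: f i => [|| [a|] | [a|] | f IHf g IHg | f IHf g IHg | f IHf | f IHf g IHg
  | f IHf g IHg | f IHf | f IHf] i /=; try done;
  try (by rewrite /suffix addn0);
  try setoid_rewrite suffixD;
  try setoid_rewrite IHf; try setoid_rewrite IHg; done.
Qed.

Lemma sat_GF_subst w f psi :
  sat w (FGF (subst f psi)) <-> infinitely_often (sat_at w (holds w psi) f).
Proof. exact: eq_infinitely_often (holds_subst w f psi). Qed.

Lemma sat_FG_subst w f psi :
  sat w (FFG (subst f psi)) <-> eventually_always (sat_at w (holds w psi) f).
Proof. exact: eq_eventually_always (holds_subst w f psi). Qed.

Lemma sat_at_mono_from w S T f i :
  no_neg_star f -> (forall j, i <= j -> S j -> T j) -> sat_at w S f i -> sat_at w T f i.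
Proof.
elim: f i => [|| [a|] | [a|] | f IHf g IHg | f IHf g IHg | f IHf | f IHf g IHg
  | f IHf g IHg | f IHf | f IHf] i //= pos ST;
  have ST_after k : forall j, i + k <= j -> S j -> T j by move=> j ikj; apply: ST; lia.
- exact: ST.
- by case/andP: pos => posf posg [fi gi]; split; [apply: IHf | apply: IHg].
- by case/andP: pos => posf posg [fi | gi]; [left; apply: IHf | right; apply: IHg].
- exact: IHf pos (ST_after 1).
- case/andP: pos => posf posg [k [gk fbefore]]; exists k; split.
    exact: IHg posg (ST_after k) gk.
  by move=> j jk; apply: IHf posf (ST_after j) (fbefore j jk).
- case/andP: pos => posf posg [falways | [k [gk fbefore]]].
    by left => k; apply: IHf posf (ST_after k) (falways k).
  right; exists k; split.
    exact: IHg posg (ST_after k) gk.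
  by move=> j jk; apply: IHf posf (ST_after j) (fbefore j jk).
- move=> inf n; have [k [nk fk]] := inf n.
  by exists k; split => //; apply: IHf pos (ST_after k) fk.
- by case=> n ev; exists n => k nk; apply: IHf pos (ST_after k) (ev k nk).
Qed.

Lemma eventually_sat_at_impl w S T f :
  no_neg_star f -> eventually_always (fun j => S j -> T j) ->
  eventually_always (fun i => sat_at w S f i -> sat_at w T f i).
Proof.
move=> pos [n ST]; exists n => i ni; apply: sat_at_mono_from => // j ij.
by apply: ST; lia.
Qed.

Lemma holds_until_weak_until w p q j : holds w (FU p q) j -> holds w (FW p q) j.
Proof. by right. Qed.

Lemma holds_weak_until_FG w p q :
  eventually_always (holds w p) -> eventually_always (holds w (FW p q)).
Proof.
move=> [n p_after_n]; exists n => j nj; left => k.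
by rewrite suffixD; apply: p_after_n; lia.
Qed.

Lemma holds_weak_until_not_FG w p q j :
  ~ eventually_always (holds w p) -> holds w (FW p q) j -> holds w (FU p q) j.
Proof.
move=> not_FG [p_always | //]; case: not_FG; exists j => k jk.
by have := p_always (k - j); rewrite /holds suffixD subnKC.
Qed.

Lemma holds_weak_until_GF w p q j :
  infinitely_often (holds w q) -> holds w (FW p q) j -> holds w (FU p q) j.
Proof.
move=> q_inf [p_always | //]; have [k [jk qk]] := q_inf j.
exists (k - j); split; last by move=> l _; apply: p_always.
by rewrite suffixD subnKC.
Qed.

Lemma holds_until_not_GF w p q :
  ~ infinitely_often (holds w q) -> eventually_always (fun j => ~ holds w (FU p q) j).
Proof.
move=> /not_infinitely_often [n q_never]; exists n => j nj [k [qk _]].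
by apply: (q_never (j + k)); [lia | rewrite /holds -suffixD].
Qed.

Lemma sat_GF_weak_until w f p q : no_neg_star f ->
  sat w (FGF (subst f (FW p q))) <->
  sat w (FGF (subst f (FU p q))) \/ (sat w (FFG p) /\ sat w (FGF (subst f FTrue))).
Proof.
move=> pos; rewrite !sat_GF_subst; split.
- case: (classic (eventually_always (holds w p))) => [p_FG | not_p_FG] inf_W.
    right; split => //; apply: infinitely_often_impl inf_W.
    by apply: eventually_sat_at_impl => //; apply: always_eventually_always.
  left; apply: infinitely_often_impl inf_W; apply: eventually_sat_at_impl => //.
  by apply: always_eventually_always => j; apply: holds_weak_until_not_FG.
- case=> [inf_U | [p_FG inf_true]].
    apply: infinitely_often_impl inf_U; apply: eventually_sat_at_impl => //.
    by apply: always_eventually_always => j; apply: holds_until_weak_until.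
  apply: infinitely_often_impl inf_true; apply: eventually_sat_at_impl => //.
  have [n W_after_n] := holds_weak_until_FG w p q p_FG.
  by exists n => j nj _; apply: W_after_n.
Qed.

Lemma sat_FG_until w f p q : no_neg_star f ->
  sat w (FFG (subst f (FU p q))) <->
  (sat w (FGF q) /\ sat w (FFG (subst f (FW p q)))) \/ sat w (FFG (subst f FFalse)).
Proof.
move=> pos; rewrite !sat_FG_subst; split.
- case: (classic (infinitely_often (holds w q))) => [q_GF | not_q_GF] ev_U.
    left; split => //; apply: eventually_always_impl ev_U; apply: eventually_sat_at_impl => //.
    by apply: always_eventually_always => j; apply: holds_until_weak_until.
  right; apply: eventually_always_impl ev_U; apply: eventually_sat_at_impl => //.
  have [n not_U_after_n] := holds_until_not_GF w p q not_q_GF.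
  by exists n => j nj U_j; apply: (not_U_after_n j nj).
- case=> [[q_GF ev_W] | ev_false].
    apply: eventually_always_impl ev_W; apply: eventually_sat_at_impl => //.
    by apply: always_eventually_always => j; apply: holds_weak_until_GF.
  apply: eventually_always_impl ev_false; apply: eventually_sat_at_impl => //.
  exact: always_eventually_always.
Qed.

End PlaceholderSemantics.

Theorem lemma3 (Ap : finType) (phi : formula (option Ap)) (psi1 psi2 : formula Ap) :
  placeholder_formula phi ->
  ltl_equiv (FGF (subst phi (FW psi1 psi2)))
        (FOr (FGF (subst phi (FU psi1 psi2)))
             (FAnd (FFG psi1) (FGF (subst phi FTrue))))
  /\
  ltl_equiv (FFG (subst phi (FU psi1 psi2)))
        (FOr (FAnd (FGF psi2) (FFG (subst phi (FW psi1 psi2))))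
             (FFG (subst phi FFalse))).
Proof.
move=> [_ phi_pos]; split => w.
- exact: sat_GF_weak_until.
- exact: sat_FG_until.
Qed.
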